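(* Let $S^{\circ}_{n'}=\langle s_{1'},s_2,\dots,s_{n-1}\rangle\le D_n$ and $\pi\in S^{\circ}_{n'}$. Let $\Phi(\pi)=\pi'^{(1)}\cdots\pi'^{(z)}$ be the standard OGS elementary factorization of $\Phi(\pi)\in S_n$, with $\pi'^{(v)}=\prod_{j=1}^{m^{(v)}}t_{h^{(v)}_j}^{\imath^{(v)}_j}$. For each $v$ let $\tau_v\in D_n$ be the element $\prod_{j=1}^{m^{(v)}}t_{h^{(v)}_j}^{\imath^{(v)}_j}$ computed in $D_n$. Then $\pi=\pi_1\cdot\pi_2\cdots\pi_z$, where $\pi_v=\tau_v$ if $\operatorname{maj}(\pi'^{(v)})=h^{(v)}_1$, and $\pi_v=w_{\operatorname{maj}(\pi'^{(v)})}\cdot\tau_v$ if $\operatorname{maj}(\pi'^{(v)})<h^{(v)}_1$.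
   Context: $D_n$ ($n\ge2$) is the Coxeter group with generators $s_{1'},s_1,\dots,s_{n-1}$ and relations $s^2=1$, $(s_i s_{i+1})^3=1$, $(s_is_j)^2=1$ for $|i-j|\ge 2$, $(s_{1'}s_2)^3=1$, $(s_{1'}s_i)^2=1$ for $i\ne 2$. In $D_n$ (and in $S_n$): $t_k=s_1\cdots s_{k-1}$; in $D_n$: $w_k=s_k s_{k-1}\cdots s_2 s_1 s_{1'} s_2\cdots s_k$ ($1\le k\le n-1$). $\Phi:D_n\to S_n$ is the homomorphism $s_{1'}\mapsto s_1$, $s_i\mapsto s_i$ ($S_n$ generated by $s_i=(i,i+1)$). Every $\sigma\in S_n$ has a unique standard OGS canonical form $t_2^{i_2}\cdots t_n^{i_n}$ ($0\le i_k<k$); writing only nonzero factors $\sigma=t_{k_1}^{i_{k_1}}\cdots t_{k_m}^{i_{k_m}}$, $\operatorname{maj}(\sigma)=\sum_j i_{k_j}$, and $\sigma$ is a standard OGS elementary element if $\sum_j i_{k_j}\le k_1$. The standard OGS elementary factorization of $\sigma$: $\sigma=\prod_{v=1}^{z}\sigma^{(v)}$ with $\sigma^{(v)}=\prod_{j=1}^{m^{(v)}}t_{h^{(v)}_j}^{\imath^{(v)}_j}$ in standard OGS canonical form, all $\imath^{(v)}_j>0$, $\operatorname{maj}(\sigma^{(1)})\le h^{(1)}_1$, and $h^{(v-1)}_{m^{(v-1)}}\le\operatorname{maj}(\sigma^{(v)})\le h^{(v)}_1$ for $2\le v\le z$, where $z$ is the minimal number for which such a presentation exists (it is unique). *)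

From mathcomp Require Import all_boot all_fingroup.
Set Implicit Arguments. Unset Strict Implicit. Unset Printing Implicit Defensive.

(* ---------- Generators of D_n, encoded as naturals ----------
   letter 0      stands for s_{1'}
   letter k >= 1 stands for s_k   (1 <= k <= n-1)
   A word is a seq nat; it is evaluated in a group gT via g : nat -> gT. *)

Definition evalW (gT : finGroupType) (g : nat -> gT) (w : seq nat) : gT :=
  (\prod_(x <- w) g x)%g.

Definition Dn_rels (n : nat) (gT : finGroupType) (g : nat -> gT) : Prop :=
  [/\ (g 0 ^+ 2 = 1)%g,
      forall i, 1 <= i <= n.-1 -> (g i ^+ 2 = 1)%g,
      forall i, 1 <= i -> i.+1 <= n.-1 -> ((g i * g i.+1) ^+ 3 = 1)%g,
      forall i j, 1 <= i <= n.-1 -> 1 <= j <= n.-1 -> i.+2 <= j ->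
                  ((g i * g j) ^+ 2 = 1)%g &
      (2 <= n.-1 -> ((g 0 * g 2) ^+ 3 = 1)%g) /\
      (forall i, 1 <= i <= n.-1 -> i != 2 -> ((g 0 * g i) ^+ 2 = 1)%g)].

(* Words for t_k = s_1 ... s_{k-1} and w_k = s_k ... s_2 s_1 s_{1'} s_2 ... s_k in D_n. *)
Definition tD (k : nat) : seq nat := iota 1 k.-1.
Definition wD (k : nat) : seq nat := rev (iota 1 k) ++ 0 :: iota 2 k.-1.

(* s_i = (i, i+1) (1-based), i.e. the transposition of the 0-based points i-1, i. *)
Definition sgen (n i : nat) : 'S_n :=
  match insub i.-1, insub i with
  | Some a, Some b => tperm a b
  | _, _ => 1%g
  end.

Definition tS (n k : nat) : 'S_n := (\prod_(i <- iota 1 k.-1) sgen n i)%g.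

Definition PhiW (n : nat) (w : seq nat) : 'S_n :=
  (\prod_(x <- w) sgen n (if x == 0%N then 1%N else x))%g.

(* ---------- Standard OGS elementary factorizations ----------
   A factor  prod_j t_{h_j}^{i_j}  is represented by the list of pairs (h_j, i_j). *)
Definition factor_val (n : nat) (f : seq (nat * nat)) : 'S_n :=
  (\prod_(p <- f) (tS n p.1) ^+ p.2)%g.

Definition canon_pos (n : nat) (f : seq (nat * nat)) : bool :=
  [&& f != [::], sorted ltn (map fst f) &
      all (fun p => [&& 2 <= p.1 <= n & 0 < p.2 < p.1]) f].

Definition majf (f : seq (nat * nat)) : nat := \sum_(p <- f) p.2.
Definition firstH (f : seq (nat * nat)) : nat := (head (0, 0) f).1.
Definition lastH (f : seq (nat * nat)) : nat := (last (0, 0) f).1.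

(* fs is a presentation of sigma as in the definition of the standard OGS
   elementary factorization (without the minimality requirement). *)
Definition is_elem_pres (n : nat) (sigma : 'S_n) (fs : seq (seq (nat * nat))) : Prop :=
  [/\ all (canon_pos n) fs,
      all (fun f => majf f <= firstH f) fs,
      sorted (fun f g => lastH f <= majf g) fs &
      sigma = (\prod_(f <- fs) factor_val n f)%g].

Definition is_std_elem_fact (n : nat) (sigma : 'S_n) (fs : seq (seq (nat * nat))) : Prop :=
  is_elem_pres sigma fs /\
  forall fs', is_elem_pres sigma fs' -> size fs <= size fs'.

Definition tauD (f : seq (nat * nat)) : seq nat :=
  flatten (map (fun p => flatten (nseq p.2 (tD p.1))) f).

Definition piD (f : seq (nat * nat)) : seq nat :=
  if majf f == firstH f then tauD f else wD (majf f) ++ tauD f.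

(* The subgroup S°_{n'} = <s_{1'}, s_2, ..., s_{n-1}> satisfies the Coxeter
   relations of type A_{n-1}, and a group generated by elements r_1, ..., r_m
   satisfying these relations has at most (m+1)! elements: every element is a
   chain r_a r_{a+1} ... r_m times an element of <r_1, ..., r_{m-1}>.  Applied to
   the diagonal subgroup generated by the (r_i, s_i) in G x S_{m+1}, which maps
   onto S_{m+1}, this shows that words in the r_i that are equal in S_{m+1} are
   equal in G.
   It thus suffices to rewrite each pi_v as a word in s_{1'}, s_2, ...  With
   t°_k = s_{1'} s_2 ... s_{k-1} one has t_k = t°_k w_{k-1} and
   w_p t_k = t°_k w_{p-1} for 0 < p < k, so w_maj can be pushed through the
   factors t_{k_1} ... t_{k_maj} of tau_v (all k_j >= h_1 >= maj), turning pi_v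
   into t°_{k_1} ... t°_{k_maj}.  Both sides of the theorem are then words in
   S°_{n'} with the same image Phi(pi) in S_n. *)

From mathcomp Require Import all_boot all_fingroup zify.
Set Implicit Arguments. Unset Strict Implicit. Unset Printing Implicit Defensive.
Open Scope group_scope.

Section Words.
Variables (gT : finGroupType) (r : nat -> gT).

Lemma evalW_cat (s t : seq nat) : evalW r (s ++ t) = evalW r s * evalW r t.
Proof. exact: big_cat. Qed.

Lemma evalW_flatten (ws : seq (seq nat)) :
  evalW r (flatten ws) = \prod_(w <- ws) evalW r w.
Proof. exact: big_flatten. Qed.

Lemma evalW_flatten_nseq k (w : seq nat) : evalW r (flatten (nseq k w)) = evalW r w ^+ k.
Proof.
elim: k => [|k IHk]; first exact: big_nil.
by rewrite /= evalW_cat IHk expgS.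
Qed.

Lemma evalW_tD k : evalW r (tD k) = \prod_(1 <= i < k) r i.
Proof. by rewrite /index_iota subn1. Qed.
End Words.

Lemma evalW_pair (gT hT : finGroupType) (r : nat -> gT) (s : nat -> hT) w :
  evalW (fun i => (r i, s i)) w = (evalW r w, evalW s w).
Proof. by elim: w => [|x w IHw]; rewrite /evalW ?big_nil ?big_cons -?/(evalW _ w) ?IHw. Qed.

Lemma commute_prod_nat (gT : finGroupType) a b (F : nat -> gT) x :
  (forall i, a <= i < b -> commute x (F i)) -> commute x (\prod_(a <= i < b) F i).
Proof. by move=> cxF; rewrite big_nat_cond; apply: commute_prod => i /andP[/cxF]. Qed.

Lemma gen_subset_mul_closed (gT : finGroupType) (A X : {set gT}) :
  1 \in X -> (forall a x, a \in A -> x \in X -> a * x \in X) -> <<A>> \subset X.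
Proof.
move=> X1 AX_X; apply/subsetP=> _ /gen_prodgP[k [c Ac ->]].
elim: k c Ac => [|k IHk] c Ac; first by rewrite big_ord0.
by rewrite big_ord_recl AX_X ?IHk.
Qed.

Lemma card_mulg_le (gT : finGroupType) (A B : {set gT}) : #|A * B| <= #|A| * #|B|.
Proof.
by rewrite -cardsX -[A * B]/(mul @2: (A, B)) curry_imset2X leq_imset_card.
Qed.

Section CoxeterRelations.
Variables (gT : finGroupType) (x y : gT).
Hypotheses (x2 : x * x = 1) (y2 : y * y = 1).

Let xV : x^-1 = x. Proof. by rewrite -[x^-1]mulg1 -x2 mulKg. Qed.
Let yV : y^-1 = y. Proof. by rewrite -[y^-1]mulg1 -y2 mulKg. Qed.

Lemma braid_of_order3 : (x * y) ^+ 3 = 1 -> x * y * x = y * x * y.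
Proof.
move=> xy3; apply/eqP; rewrite eq_mulgV1 !invMg xV yV.
by rewrite -xy3 !expgS expg0 mulg1 !mulgA.
Qed.

Lemma commute_of_order2 : (x * y) ^+ 2 = 1 -> commute x y.
Proof.
move=> xy2; apply/eqP; rewrite eq_mulgV1 !invMg xV yV.
by rewrite -xy2 !expgS expg0 mulg1 !mulgA.
Qed.
End CoxeterRelations.

Definition typeA_rels (gT : finGroupType) (r : nat -> gT) (m : nat) : Prop :=
  [/\ forall i, 0 < i <= m -> r i * r i = 1,
      forall i, 0 < i < m -> r i * r i.+1 * r i = r i.+1 * r i * r i.+1 &
      forall i j, 0 < i -> i.+1 < j <= m -> commute (r i) (r j)].

Definition gensA (gT : finGroupType) (r : nat -> gT) (m : nat) : {set gT} :=
  [set r i.+1 | i : 'I_m].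

Section TypeA.
Variables (gT : finGroupType) (r : nat -> gT).

Lemma typeA_relsW m m' : m' <= m -> typeA_rels r m -> typeA_rels r m'.
Proof.
move=> le_m'm [r2 r3 rC]; split=> [i ? | i ? | i j ? ?]; [apply: r2 | apply: r3 | apply: rC]; lia.
Qed.

Lemma typeA_slide m a b p : typeA_rels r m -> 0 < a < p -> p < b <= m.+1 ->
  r p * \prod_(a <= i < b) r i = \prod_(a <= i < b) r i * r p.-1.
Proof.
move=> [r2 r3 rC] /andP[a_gt0 lt_ap] /andP[lt_pb le_bm].
have [d def_p] : exists d, p = a + d.+1 by exists (p - a.+1); lia.
elim: d a def_p a_gt0 {lt_ap} => [|d IHd] a def_p a_gt0; rewrite big_ltn; try lia.
  rewrite def_p addn1 big_ltn /=; last by lia.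
  have cR : commute (r a) (\prod_(a.+2 <= i < b) r i).
    by apply: commute_prod_nat => i ?; apply: rC; lia.
  rewrite !mulgA -r3; last by lia.
  by rewrite -!mulgA cR.
have cp : commute (r p) (r a) by apply/commute_sym/rC; lia.
by rewrite mulgA cp -mulgA (IHd a.+1) ?mulgA //; lia.
Qed.

Lemma mem_gensA m i : 0 < i <= m -> r i \in <<gensA r m>>.
Proof.
move=> i_range; have lt_i1m : i.-1 < m by lia.
by apply/mem_gen/imsetP; exists (Ordinal lt_i1m); rewrite //= prednK //; lia.
Qed.

Lemma evalW_mem_gensA m w : all (fun x => 0 < x <= m) w -> evalW r w \in <<gensA r m>>.
Proof.
by move=> /allP w_range; rewrite /evalW big_seq; apply: group_prod => x /w_range /mem_gensA.
Qed.

Lemma gensA_subset_chains m : typeA_rels r m.+1 ->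
  <<gensA r m.+1>> \subset [set \prod_(a.+1 <= j < m.+2) r j | a : 'I_m.+2] * <<gensA r m>>.
Proof.
move=> rA; have [r2 _ rC] := rA.
set C := [set _ | a : 'I_m.+2]; set H := <<gensA r m>>.
pose chain a := \prod_(a <= j < m.+2) r j.
have chainC a : 0 < a <= m.+2 -> chain a \in C.
  move=> a_range; have lt_a1 : a.-1 < m.+2 by lia.
  by apply/imsetP; exists (Ordinal lt_a1); rewrite //= prednK //; lia.
have chainCH a x : 0 < a <= m.+2 -> x \in H -> chain a * x \in C * H.
  by move=> a_range Hx; rewrite mem_mulg ?chainC.
have chainC1 a : 0 < a <= m.+2 -> chain a \in C * H.
  by move=> a_range; rewrite -[chain a]mulg1 chainCH.
have lmul_chain a i : 0 < a <= m.+2 -> 0 < i <= m.+1 -> r i * chain a \in C * H.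
  move=> a_range i_range; case: (ltngtP i.+1 a) => [lt_i1a | lt_ai1 | def_a].
  - have cia : commute (r i) (chain a) by apply: commute_prod_nat => j ?; apply: rC; lia.
    by rewrite cia chainCH ?mem_gensA //; lia.
  - have [def_i | lt_ai] := eqVneq i a.
      rewrite def_i /chain big_ltn ?mulgA ?r2 ?mul1g; try lia.
      by apply: chainC1; lia.
    by rewrite (typeA_slide rA) ?chainCH ?mem_gensA //; lia.
  - by rewrite -def_a /chain -big_ltn ?chainC1 //; lia.
apply: gen_subset_mul_closed.
  have <- : chain m.+2 = 1 by rewrite /chain big_geq.
  by apply: chainC1; rewrite leqnn.
move=> _ _ /imsetP[i _ ->] /mulsgP[_ h /imsetP[a _ ->] Hh ->]; rewrite mulgA.
have /mulsgP[c h' Cc Hh' ->] : r i.+1 * \prod_(a.+1 <= j < m.+2) r j \in C * H.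
  by apply: (lmul_chain a.+1 i.+1); move: (ltn_ord a) (ltn_ord i); lia.
by rewrite -mulgA mem_mulg ?groupM.
Qed.

Lemma card_gensA m : typeA_rels r m -> #|<<gensA r m>>| <= m.+1`!.
Proof.
elim: m => [|m IHm] rA.
  suff -> : gensA r 0 = set0 by rewrite gen0 cards1.
  by apply/setP => x; rewrite inE; apply/imsetP => -[[]].
apply: leq_trans (subset_leq_card (gensA_subset_chains rA)) _.
apply: leq_trans (card_mulg_le _ _) _.
rewrite factS leq_mul ?(IHm (typeA_relsW (leqnSn m) rA)) //.
by apply: leq_trans (leq_imset_card _ _) _; rewrite card_ord.
Qed.
End TypeA.

Lemma typeA_rels_pair (gT hT : finGroupType) (r : nat -> gT) (s : nat -> hT) m :
  typeA_rels r m -> typeA_rels s m -> typeA_rels (fun i => (r i, s i)) m.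
Proof.
have pairM (x y : gT * hT) : x * y = (x.1 * y.1, x.2 * y.2) by [].
move=> [r2 r3 rC] [s2 s3 sC].
split=> [i ? | i ? | i j ? ?]; rewrite /commute !pairM /=.
- by rewrite (r2 i) ?(s2 i).
- by rewrite (r3 i) ?(s3 i).
- by rewrite (rC i j) ?(sC i j).
Qed.

Section Transpositions.
Variable T : finType.
Implicit Types x y z : T.

Let tpermJE a b x y : tperm a b * tperm x y * tperm a b = tperm x y ^ tperm a b.
Proof. by rewrite /conjg tpermV mulgA. Qed.

Lemma tperm_braid x y z : x != y -> y != z -> x != z ->
  tperm x y * tperm y z * tperm x y = tperm y z * tperm x y * tperm y z.
Proof.
move=> nxy nyz nxz; rewrite !tpermJE !tpermJ tpermL tpermR !tpermD //.
all: by rewrite eq_sym.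
Qed.

Lemma tperm_commute x y z t : x != z -> x != t -> y != z -> y != t ->
  commute (tperm x y) (tperm z t).
Proof.
move=> nxz nxt nyz nyt; apply: (mulIg (tperm x y)).
by rewrite -[RHS]mulgA tperm2 mulg1 tpermJE tpermJ !tpermD // eq_sym.
Qed.
End Transpositions.

Lemma sgenE n i (lt_in : i < n) (lt_i1n : i.-1 < n) :
  sgen n i = tperm (Ordinal lt_i1n) (Ordinal lt_in).
Proof. by rewrite /sgen (insubT (fun x => x < n) lt_i1n) (insubT (fun x => x < n) lt_in). Qed.

Lemma sgen_typeA n : typeA_rels (sgen n) n.-1.
Proof.
have ord_neq (x y : 'I_n) : val x != val y -> x != y by apply: contra => /eqP->.
split=> [i _ | i i_range | i j i_gt0 ij_range].
- rewrite /sgen; case: insub => [a|]; last exact: mulg1.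
  by case: insub => [b|]; [exact: tperm2 | exact: mulg1].
- have lt_i1n : i.+1 < n by lia. have lt_in : i < n by lia. have lt_ip : i.-1 < n by lia.
  rewrite (sgenE lt_i1n lt_in) (sgenE lt_in lt_ip).
  by apply: tperm_braid; apply: ord_neq => /=; lia.
- have lt_jn : j < n by lia. have lt_jp : j.-1 < n by lia.
  have lt_in : i < n by lia. have lt_ip : i.-1 < n by lia.
  rewrite (sgenE lt_jn lt_jp) (sgenE lt_in lt_ip).
  by apply: tperm_commute; apply: ord_neq => /=; lia.
Qed.

Lemma gensA_sgen n : [set: 'S_n.+1] \subset <<gensA (sgen n.+1) n>>.
Proof.
rewrite -(gen_tperm ord0) gen_subG; apply/subsetP => _ /imsetP[[k lt_kn] _ ->].
elim: k lt_kn => [|[|k] IHk] lt_kn.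
- by rewrite (_ : Ordinal lt_kn = ord0) ?tperm1 ?group1 //; apply: val_inj.
- have -> : tperm ord0 (Ordinal lt_kn) = sgen n.+1 1.
    by rewrite (sgenE lt_kn (ltn0Sn n)); congr tperm; apply: val_inj.
  by rewrite mem_gensA //; lia.
- have lt_k1n : k.+1 < n.+1 by lia.
  have -> : tperm ord0 (Ordinal lt_kn) = tperm ord0 (Ordinal lt_k1n) ^ sgen n.+1 k.+2.
    by rewrite (sgenE lt_kn lt_k1n) tpermJ tpermL tpermD.
  by apply: groupJ; [apply: IHk | apply: mem_gensA; lia].
Qed.

Theorem typeA_evalW_eq (gT : finGroupType) (r : nat -> gT) m w1 w2 :
    typeA_rels r m ->
    all (fun x => 0 < x <= m) w1 -> all (fun x => 0 < x <= m) w2 ->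
  evalW (sgen m.+1) w1 = evalW (sgen m.+1) w2 -> evalW r w1 = evalW r w2.
Proof.
move=> rA w1_range w2_range eq_w12.
pose rs i := (r i, sgen m.+1 i).
have rsA : typeA_rels rs m := typeA_rels_pair rA (typeA_relsW (leqnn m) (sgen_typeA m.+1)).
set G := <<gensA rs m>>.
have onto : [set: 'S_m.+1] \subset snd @* G.
  apply: subset_trans (gensA_sgen m) _; rewrite gen_subG.
  apply/subsetP => _ /imsetP[i _ ->]; rewrite -[sgen _ _]/(snd (rs i.+1)) mem_morphim ?inE //.
  by rewrite mem_gensA ?ltn_ord.
have inj_snd : {in G &, injective snd}.
  apply/imset_injP; rewrite eqn_leq leq_imset_card -morphimEsub ?subsetT //=.
  apply: leq_trans (card_gensA rsA) _; rewrite -card_Sn -cardsT.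
  exact: subset_leq_card onto.
have := inj_snd _ _ (evalW_mem_gensA rs w1_range) (evalW_mem_gensA rs w2_range).
by rewrite !evalW_pair /= eq_w12 => /(_ erefl) [].
Qed.

(* [primed g] replaces s_1 by s_{1'}: on 1, ..., n-1 it lists the Coxeter
   generators s_{1'}, s_2, ..., s_{n-1} of S°_{n'}, and [unprime] is Phi on letters. *)
Definition primed (gT : finGroupType) (g : nat -> gT) (i : nat) : gT :=
  g (if i == 1%N then 0%N else i).

Definition unprime (x : nat) : nat := if x == 0%N then 1%N else x.

Definition tseq (f : seq (nat * nat)) : seq nat := flatten [seq nseq p.2 p.1 | p <- f].

Lemma tauD_tseq f : tauD f = flatten [seq tD k | k <- tseq f].
Proof.
elim: f => [//|p f IHf].
by rewrite /tauD /tseq /= -/(tauD f) -/(tseq f) IHf map_cat flatten_cat map_nseq.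
Qed.

Lemma evalW_tauD (gT : finGroupType) (r : nat -> gT) f :
  evalW r (tauD f) = \prod_(k <- tseq f) \prod_(1 <= i < k) r i.
Proof. by rewrite tauD_tseq evalW_flatten big_map; apply: eq_bigr => k _; rewrite evalW_tD. Qed.

Lemma size_tseq f : size (tseq f) = majf f.
Proof.
elim: f => [|p f IHf]; first by rewrite /majf big_nil.
by rewrite /tseq /= size_cat size_nseq -/(tseq f) IHf /majf big_cons.
Qed.

Section CanonicalFactor.
Variables (n : nat) (f : seq (nat * nat)).
Hypothesis f_canon : canon_pos n f.

Lemma firstH_gt1 : 1 < firstH f.
Proof. by case/and3P: f_canon; case: f => [//|[h i] f'] _ _ /= /andP[/andP[/andP[]]]. Qed.

Lemma tseq_head : tseq f = firstH f :: behead (tseq f).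
Proof.
case/and3P: f_canon; case: f => [//|[h [|i]] f'] _ _ /=; first by rewrite andbF.
by rewrite /tseq /firstH.
Qed.

Lemma tseq_range : all (fun k => firstH f <= k <= n) (tseq f).
Proof.
case/and3P: f_canon; case: f => [//|[h i] f'] _ f_sorted /allP f_range.
have h_min p : p \in f' -> h < p.1.
  by move: f_sorted => /= /(order_path_min ltn_trans) /allP h_min /(map_f fst) /h_min.
apply/allP => k /flatten_mapP[p p_f]; rewrite mem_nseq => /andP[_ /eqP ->].
have /andP[/andP[_ ->] _] := f_range p p_f; rewrite andbT.
by move: p_f; rewrite inE => /predU1P[-> //|/h_min/ltnW].
Qed.

Lemma tauD_range : all (fun x => 0 < x <= n.-1) (tauD f).
Proof.
rewrite tauD_tseq; apply/allP => x /flatten_mapP[k k_f].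
have /andP[_ k_le_n] := allP tseq_range k k_f.
by rewrite mem_iota; lia.
Qed.
End CanonicalFactor.

(* w_p as a group element, with w_0 = 1 (the word [wD 0] would give s_{1'}). *)
Definition wval (gT : finGroupType) (g : nat -> gT) (p : nat) : gT :=
  if p is 0 then 1 else evalW g (wD p).

Lemma wDS p : wD p.+2 = p.+2 :: rcons (wD p.+1) p.+2.
Proof.
have iotaS m k : iota m k.+1 = rcons (iota m k) (m + k) by rewrite -addn1 iotaD cats1.
by rewrite /wD [iota 1 _]iotaS rev_rcons [iota 2 _]iotaS -rcons_cons rcons_cat add1n add2n.
Qed.

Section DnQuotient.
Variables (n : nat) (gT : finGroupType) (g : nat -> gT).
Hypotheses (n_gt1 : 1 < n) (gD : Dn_rels n g).

Local Notation t k := (\prod_(1 <= i < k) g i).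
Local Notation t' k := (\prod_(1 <= i < k) primed g i).

Let g2 i : 0 < i <= n.-1 -> g i * g i = 1.
Proof. by case: gD => _ gi2 _ _ _ /gi2; rewrite expgS expg1. Qed.

Let g02 : g 0%N * g 0%N = 1.
Proof. by case: gD => g02 _ _ _ _; rewrite -g02 expgS expg1. Qed.

Lemma Dn_commute01 : commute (g 0%N) (g 1%N).
Proof.
case: gD => _ _ _ _ [_ g0C]; apply: commute_of_order2 => //; rewrite ?g2 ?g0C //; lia.
Qed.

Lemma Dn_typeA : typeA_rels g n.-1.
Proof.
case: gD => _ _ g3 gC _; split => [i | i i_range | i j i_gt0 ij_range]; first exact: g2.
- by apply: braid_of_order3; rewrite ?g2 ?g3 //; lia.
- by apply: commute_of_order2; rewrite ?g2 ?gC //; lia.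
Qed.

Lemma Dn_typeA_primed : typeA_rels (primed g) n.-1.
Proof.
case: gD => _ _ g3 gC [g03 g0C]; rewrite /primed.
split => [i i_range | i i_range | i j i_gt0 ij_range].
- by case: eqVneq => _; rewrite ?g02 ?g2.
- have -> : (i.+1 == 1%N) = false by apply/eqP; lia.
  by case: (eqVneq i 1%N) => [->|i_neq1]; apply: braid_of_order3;
    rewrite ?g02 ?g2 ?g03 ?g3 //; lia.
- have -> : (j == 1%N) = false by apply/eqP; lia.
  by case: (eqVneq i 1%N) => [i1|i_neq1]; apply: commute_of_order2;
    rewrite ?g02 ?g2 ?g0C ?gC //; lia.
Qed.

Let primed_S p : primed g p.+2 = g p.+2. Proof. by []. Qed.

Let t_split k : 1 < k -> t k = g 1%N * \prod_(2 <= i < k) g i.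
Proof. exact: big_ltn. Qed.

Let primed_t k : 1 < k -> t' k = g 0%N * \prod_(2 <= i < k) g i.
Proof.
move=> k_gt1; rewrite big_ltn //; congr (_ * _).
by apply: eq_big_nat => i /andP[i_gt1 _]; rewrite /primed ifN //; lia.
Qed.

Lemma wval_step p : p.+1 < n -> primed g p.+1 * wval g p * g p.+1 = wval g p.+1.
Proof.
case: p => [|p] p_lt.
  by rewrite mulg1 Dn_commute01 /wval /evalW /wD /= big_cons big_cons big_nil mulg1.
by rewrite /wval /primed wDS -cats1 -cat_cons evalW_cat /evalW big_cons big_seq1.
Qed.

Lemma t_wval k : 1 < k <= n -> t k = t' k * wval g k.-1.
Proof.
case: k => [//|k] /andP[k_gt0 k_le_n]; elim: k k_gt0 k_le_n => [//|[|k] IHk] _ k_lt_n.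
  rewrite big_nat1 primed_t // big_geq // mulg1 -(wval_step (p := 0)) //= mulg1.
  by rewrite mulgA g02 mul1g.
rewrite [t k.+3]big_nat_recr ?[t' k.+3]big_nat_recr //.
rewrite IHk -?(wval_step (p := k.+1)) ?primed_S; try lia.
by rewrite !mulgA -[t' k.+2 * g k.+2 * _]mulgA g2 ?mulg1 //; lia.
Qed.

Lemma wval_t p k : p < k.-1 -> k <= n -> wval g p.+1 * t k = t' k * wval g p.
Proof.
elim: p => [|p IHp] p_lt k_le_n.
  rewrite -(wval_step (p := 0)) ?t_split ?primed_t //=; try lia.
  by rewrite !mulg1 -mulgA (mulgA (g 1%N)) g2 ?mul1g //; lia.
have slide := typeA_slide Dn_typeA (a := 1) (b := k) (p := p.+2).
have slide' := typeA_slide Dn_typeA_primed (a := 1) (b := k) (p := p.+2).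
rewrite -(wval_step (p := p.+1)) ?primed_S -?mulgA ?slide ?mulgA; try lia.
rewrite -(mulgA _ (wval g _)) IHp; try lia.
rewrite mulgA -primed_S slide'; try lia.
by rewrite -!mulgA (mulgA (primed g _)) wval_step //; lia.
Qed.

Lemma wval_prod_t ks : all (fun k => size ks < k <= n) ks ->
  wval g (size ks) * \prod_(k <- ks) t k = \prod_(k <- ks) t' k.
Proof.
elim: ks => [|k ks IHks] /=; first by rewrite !big_nil mulg1.
case/andP=> /andP[lt_k k_le_n] ks_range.
rewrite !big_cons mulgA wval_t -?mulgA ?IHks //; try lia.
by apply: sub_all ks_range => j /andP[? ?]; apply/andP; split; lia.
Qed.

Lemma piD_primed f : canon_pos n f -> majf f <= firstH f ->
  evalW g (piD f) = evalW (primed g) (tauD f).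
Proof.
move=> f_canon maj_le; rewrite /piD evalW_tauD.
have h_gt1 := firstH_gt1 f_canon.
set ks := tseq f; set h := firstH f in maj_le h_gt1 *.
have ks_head : ks = h :: behead ks := tseq_head f_canon.
have ks_range : all (fun k => h <= k <= n) ks := tseq_range f_canon.
have ks_size : size ks = majf f := size_tseq f.
have /andP[h_le_n tail_range] : (h <= n) && all (fun k => h <= k <= n) (behead ks).
  by move: ks_range; rewrite ks_head /= leqnn.
case: eqVneq => [maj_eq | maj_neq].
  have size_tail : size (behead ks) = h.-1 by rewrite size_behead ks_size maj_eq.
  rewrite evalW_tauD -/ks ks_head !big_cons t_wval -?mulgA -?size_tail ?wval_prod_t //.
  - by apply: sub_all tail_range => k /andP[? ?]; rewrite size_tail; apply/andP; split; lia.
  - by apply/andP; split.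
have maj_gt0 : 0 < majf f by rewrite -ks_size ks_head.
rewrite evalW_cat evalW_tauD -/ks -ks_size.
have -> : evalW g (wD (size ks)) = wval g (size ks) by rewrite /wval ks_head.
apply: wval_prod_t; apply: sub_all ks_range => k /andP[? ?].
by rewrite ks_size; apply/andP; split; lia.
Qed.
End DnQuotient.

Lemma evalW_unprime (gT : finGroupType) (g : nat -> gT) w :
  1%N \notin w -> evalW g w = evalW (primed g) (map unprime w).
Proof.
move=> w_not1; rewrite /evalW big_map; apply: eq_big_seq => x x_w.
rewrite /primed /unprime; case: (eqVneq x 0%N) => [-> //|x_neq0].
by rewrite ifN //; apply: contraNneq w_not1 => <-.
Qed.

Lemma PhiW_unprime n w : PhiW n w = evalW (sgen n) (map unprime w).
Proof. by rewrite /evalW big_map. Qed.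

Lemma factor_val_tauD n f : factor_val n f = evalW (sgen n) (tauD f).
Proof.
rewrite /tauD evalW_flatten big_map; apply: eq_bigr => p _.
by rewrite evalW_flatten_nseq.
Qed.

Close Scope group_scope.

Theorem mainTheorem10 (n : nat) (gT : finGroupType) (g : nat -> gT)
    (u : seq nat) (fs : seq (seq (nat * nat))) :
  2 <= n ->
  Dn_rels n g ->
  all (fun x => (x == 0) || (2 <= x <= n.-1)) u ->
  is_std_elem_fact (PhiW n u) fs ->
  evalW g u = evalW g (flatten (map piD fs)).
Proof.
move=> n_gt1 gD /allP u_letters [[/allP fs_canon /allP fs_maj _ Phi_u] _].
transitivity (evalW (primed g) (flatten (map tauD fs))); last first.
  rewrite !evalW_flatten !big_map; apply: eq_big_seq => f f_fs.
  by rewrite (piD_primed n_gt1 gD) ?fs_canon ?fs_maj.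
have u_not1 : 1 \notin u by apply/negP => /u_letters.
rewrite evalW_unprime //.
case: n n_gt1 gD u_letters Phi_u fs_canon {fs_maj} => [//|m] n_gt1 gD u_letters Phi_u fs_canon.
apply: typeA_evalW_eq (Dn_typeA_primed n_gt1 gD) _ _ _.
- apply/allP => _ /mapP[x /u_letters x_range ->]; rewrite /unprime; case: eqP x_range => /=; lia.
- apply/allP => x /flatten_mapP[f /fs_canon f_canon]; exact: (allP (tauD_range f_canon)).
- rewrite -PhiW_unprime Phi_u evalW_flatten big_map; apply: eq_bigr => f _.
  exact: factor_val_tauD.
Qed.
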